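(* Let $W'$ and $W''$ be B-DMCs, and let $W^-=W'\boxminus W''$ and $W^+=W'\boxplus W''$. Then $$J(W^-)+J(W^+)\ \ge\ J(W')+J(W''),$$ and equality holds only if $J(W')\in\{0,1\}$ or $J(W'')\in\{0,1\}$.
   Context: A B-DMC $V$ is a channel with input alphabet $\{0,1\}$, a finite output alphabet $\mathcal Y$ and transition probabilities $V(y|x)$. With base-2 logarithms: $Z(V)=\sum_y\sqrt{V(y|0)V(y|1)}$ and $J(V)=\log\frac{2}{1+Z(V)}$. For B-DMCs $V':\{0,1\}\to\mathcal Y_1$ and $V'':\{0,1\}\to\mathcal Y_2$ define $V'\boxminus V'':\{0,1\}\to\mathcal Y_1\times\mathcal Y_2$ by $(V'\boxminus V'')(y_1,y_2|x_1)=\sum_{x_2\in\{0,1\}}\frac12V'(y_1|x_1\oplus x_2)V''(y_2|x_2)$, and $V'\boxplus V'':\{0,1\}\to\mathcal Y_1\times\mathcal Y_2\times\{0,1\}$ by $(V'\boxplus V'')(y_1,y_2,x_1|x_2)=\frac12V'(y_1|x_1\oplus x_2)V''(y_2|x_2)$. *)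

From Stdlib Require Import Reals List.
Import ListNotations.
Open Scope R_scope.

Definition rsum {Y : Type} (l : list Y) (f : Y -> R) : R :=
  fold_right (fun y acc => f y + acc) 0 l.

Definition log2 (x : R) : R := ln x / ln 2.

(* A B-DMC with input alphabet {0,1} (encoded as bool, 0 = false, 1 = true)
   and finite output alphabet Y, whose elements are enumerated exactly once by
   the list l.  V x y is the transition probability V(y|x). *)
Definition is_BDMC {Y : Type} (l : list Y) (V : bool -> Y -> R) : Prop :=
  NoDup l /\ (forall y : Y, In y l) /\
  (forall x y, 0 <= V x y) /\
  (forall x, rsum l (V x) = 1).

Definition Zb {Y : Type} (l : list Y) (V : bool -> Y -> R) : R :=
  rsum l (fun y => sqrt (V false y * V true y)).

Definition Jb {Y : Type} (l : list Y) (V : bool -> Y -> R) : R :=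
  log2 (2 / (1 + Zb l V)).

Definition bminus {Y1 Y2 : Type} (V' : bool -> Y1 -> R) (V'' : bool -> Y2 -> R)
  : bool -> Y1 * Y2 -> R :=
  fun x1 y => let (y1, y2) := y in
    rsum [false; true] (fun x2 => / 2 * V' (xorb x1 x2) y1 * V'' x2 y2).

Definition bplus {Y1 Y2 : Type} (V' : bool -> Y1 -> R) (V'' : bool -> Y2 -> R)
  : bool -> (Y1 * Y2) * bool -> R :=
  fun x2 y => let '(y1, y2, x1) := y in
    / 2 * V' (xorb x1 x2) y1 * V'' x2 y2.

Definition minus_out {Y1 Y2 : Type} (l1 : list Y1) (l2 : list Y2) : list (Y1 * Y2) :=
  list_prod l1 l2.
Definition plus_out {Y1 Y2 : Type} (l1 : list Y1) (l2 : list Y2)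
  : list ((Y1 * Y2) * bool) :=
  list_prod (list_prod l1 l2) [false; true].

(* Both J(W^-) + J(W^+) and J(W') + J(W'') are of the form
   2 - log2 ((1 + z) (1 + z')), so it suffices to compare Bhattacharyya
   parameters.  Writing a = Z(W') and b = Z(W''), one has Z(W^+) = a b exactly
   and Z(W^-) <= a + b - a b, the latter by bounding each output term of W^-
   separately (an AM-GM type estimate).  The identity
   (1 + a + b - a b) (1 + a b) + a b (1 - a) (1 - b) = (1 + a) (1 + b)
   then gives the inequality, with equality forcing a b (1 - a) (1 - b) = 0. *)

From Stdlib Require Import Reals List Lra Psatz.
Open Scope R_scope.

Lemma rsum_ext {Y} (l : list Y) (f g : Y -> R) :
  (forall y, f y = g y) -> rsum l f = rsum l g.
Proof. intro H; induction l; simpl; [reflexivity | rewrite H, IHl; reflexivity]. Qed.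

Lemma rsum_le {Y} (l : list Y) (f g : Y -> R) :
  (forall y, f y <= g y) -> rsum l f <= rsum l g.
Proof. intro H; induction l; simpl; [lra | specialize (H a); lra]. Qed.

Lemma rsum_nonneg {Y} (l : list Y) (f : Y -> R) :
  (forall y, 0 <= f y) -> 0 <= rsum l f.
Proof. intro H; induction l; simpl; [lra | specialize (H a); lra]. Qed.

Lemma rsum_plus {Y} (l : list Y) (f g : Y -> R) :
  rsum l (fun y => f y + g y) = rsum l f + rsum l g.
Proof. induction l; simpl; [lra | rewrite IHl; lra]. Qed.

Lemma rsum_mult_l {Y} (l : list Y) (c : R) (f : Y -> R) :
  rsum l (fun y => c * f y) = c * rsum l f.
Proof. induction l; simpl; [lra | rewrite IHl; lra]. Qed.

Lemma rsum_app {Y} (l l' : list Y) (f : Y -> R) :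
  rsum (l ++ l') f = rsum l f + rsum l' f.
Proof. induction l; simpl; [lra | rewrite IHl; lra]. Qed.

Lemma rsum_map {Y Y'} (l : list Y) (h : Y -> Y') (f : Y' -> R) :
  rsum (map h l) f = rsum l (fun y => f (h y)).
Proof. induction l; simpl; [lra | rewrite IHl; lra]. Qed.

Lemma rsum_list_prod {Y1 Y2} (l1 : list Y1) (l2 : list Y2) (f : Y1 * Y2 -> R) :
  rsum (list_prod l1 l2) f = rsum l1 (fun a => rsum l2 (fun b => f (a, b))).
Proof. induction l1; simpl; [lra | rewrite rsum_app, rsum_map, IHl1; lra]. Qed.

Lemma rsum_mul {Y1 Y2} (l1 : list Y1) (l2 : list Y2) (f : Y1 -> R) (g : Y2 -> R) :
  rsum l1 (fun a => rsum l2 (fun b => f a * g b)) = rsum l1 f * rsum l2 g.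
Proof.
  rewrite Rmult_comm, <- rsum_mult_l.
  apply rsum_ext; intro a.
  rewrite Rmult_comm, <- rsum_mult_l; apply rsum_ext; intro; ring.
Qed.

Lemma nonneg_is_square x : 0 <= x -> exists u, 0 <= u /\ x = u * u.
Proof. intro Hx; exists (sqrt x); split; [apply sqrt_pos | now rewrite sqrt_sqrt]. Qed.

Lemma sqrt_mul_squares u v : 0 <= u -> 0 <= v -> sqrt (u * u * (v * v)) = u * v.
Proof.
  intros Hu Hv; replace (u * u * (v * v)) with ((u * v) * (u * v)) by ring.
  apply sqrt_square; nra.
Qed.

Lemma sqrt_le_of_le_square x r : 0 <= r -> x <= r * r -> sqrt x <= r.
Proof. intros Hr Hx; rewrite <- (sqrt_square r Hr); now apply sqrt_le_1_alt. Qed.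

Lemma sqrt_mul_le_avg p q : 0 <= p -> 0 <= q -> sqrt (p * q) <= (p + q) / 2.
Proof.
  intros Hp Hq.
  destruct (nonneg_is_square p Hp) as [u [Hu ->]], (nonneg_is_square q Hq) as [v [Hv ->]].
  rewrite sqrt_mul_squares by assumption.
  pose proof (Rle_0_sqr (u - v)); unfold Rsqr in *; lra.
Qed.

Lemma sqrt_bplus_term P0 P1 Q0 Q1 :
  0 <= P0 -> 0 <= P1 -> 0 <= Q0 -> 0 <= Q1 ->
  sqrt (/ 2 * P0 * Q0 * (/ 2 * P1 * Q1)) = / 2 * (sqrt (P0 * P1) * sqrt (Q0 * Q1)).
Proof.
  intros H0 H1 H2 H3.
  replace (/ 2 * P0 * Q0 * (/ 2 * P1 * Q1)) with (/ 2 * / 2 * (P0 * P1 * (Q0 * Q1)))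
    by ring.
  rewrite sqrt_mult_alt, sqrt_square, sqrt_mult by nra; ring.
Qed.

Lemma sqrt_bminus_term_le P0 P1 Q0 Q1 :
  0 <= P0 -> 0 <= P1 -> 0 <= Q0 -> 0 <= Q1 ->
  sqrt ((/ 2 * P0 * Q0 + / 2 * P1 * Q1) * (/ 2 * P1 * Q0 + / 2 * P0 * Q1))
  <= / 2 * (sqrt (P0 * P1) * (Q0 + Q1) + sqrt (Q0 * Q1) * (P0 + P1))
     - sqrt (P0 * P1) * sqrt (Q0 * Q1).
Proof.
  intros H0 H1 H2 H3.
  destruct (nonneg_is_square P0 H0) as [u [Hu ->]], (nonneg_is_square P1 H1) as [v [Hv ->]],
    (nonneg_is_square Q0 H2) as [z [Hz ->]], (nonneg_is_square Q1 H3) as [w [Hw ->]].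
  rewrite !sqrt_mul_squares by assumption.
  apply sqrt_le_of_le_square.
  - assert (0 <= u * v * ((z - w) * (z - w))).
    { apply Rmult_le_pos; [apply Rmult_le_pos | apply Rle_0_sqr]; assumption. }
    assert (0 <= z * w * (u * u + v * v)).
    { apply Rmult_le_pos; [apply Rmult_le_pos | nra]; assumption. }
    nra.
  - assert (Hgap : 0 <= u * v * z * w * ((u - v) * (u - v)) * ((z - w) * (z - w))).
    { assert (0 <= u * v * z * w) by (repeat apply Rmult_le_pos; assumption).
      apply Rmult_le_pos; [apply Rmult_le_pos |]; assumption || apply Rle_0_sqr. }
    (* the square of the bound exceeds the product by exactly Hgap / 2 *)
    nra.
Qed.

Lemma Zb_nonneg {Y} (l : list Y) (V : bool -> Y -> R) : 0 <= Zb l V.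
Proof. apply rsum_nonneg; intro; apply sqrt_pos. Qed.

Lemma Zb_le_1 {Y} (l : list Y) (V : bool -> Y -> R) : is_BDMC l V -> Zb l V <= 1.
Proof.
  intros [_ [_ [Hpos Hsum]]].
  apply Rle_trans with (rsum l (fun y => / 2 * V false y + / 2 * V true y)).
  - apply rsum_le; intro y.
    pose proof (sqrt_mul_le_avg _ _ (Hpos false y) (Hpos true y)); lra.
  - rewrite rsum_plus, !rsum_mult_l, !Hsum; lra.
Qed.

Section CombinedChannels.

Variables (Y1 Y2 : Type) (l1 : list Y1) (l2 : list Y2).
Variables (W' : bool -> Y1 -> R) (W'' : bool -> Y2 -> R).

Lemma Zb_bplus :
  (forall x y, 0 <= W' x y) -> (forall x y, 0 <= W'' x y) ->
  Zb (plus_out l1 l2) (bplus W' W'') = Zb l1 W' * Zb l2 W''.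
Proof.
  intros Hpos1 Hpos2.
  unfold Zb, plus_out; rewrite <- rsum_mul, !rsum_list_prod.
  apply rsum_ext; intro a; apply rsum_ext; intro b; simpl.
  rewrite !sqrt_bplus_term, (Rmult_comm (W' true a)) by auto; lra.
Qed.

Lemma Zb_bminus_le :
  is_BDMC l1 W' -> is_BDMC l2 W'' ->
  Zb (minus_out l1 l2) (bminus W' W'') <= Zb l1 W' + Zb l2 W'' - Zb l1 W' * Zb l2 W''.
Proof.
  intros [_ [_ [Hpos1 Hsum1]]] [_ [_ [Hpos2 Hsum2]]].
  set (s1 a := sqrt (W' false a * W' true a)).
  set (s2 b := sqrt (W'' false b * W'' true b)).
  unfold Zb, minus_out; rewrite rsum_list_prod.
  apply Rle_trans with (rsum l1 (fun a => rsum l2 (fun b =>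
    / 2 * s1 a * (W'' false b + W'' true b)
    + (/ 2 * (W' false a + W' true a) - s1 a) * s2 b))).
  - apply rsum_le; intro a; apply rsum_le; intro b; simpl.
    rewrite !Rplus_0_r.
    pose proof (sqrt_bminus_term_le _ _ _ _
                  (Hpos1 false a) (Hpos1 true a) (Hpos2 false b) (Hpos2 true b)).
    unfold s1, s2; lra.
  - right.
    rewrite (rsum_ext _ _ (fun a => (1 - rsum l2 s2) * s1 a
               + (/ 2 * rsum l2 s2 * W' false a + / 2 * rsum l2 s2 * W' true a))).
    + rewrite !rsum_plus, !rsum_mult_l, !Hsum1; unfold s1, s2; lra.
    + intro a; rewrite rsum_plus, !rsum_mult_l, rsum_plus, !Hsum2; field.
Qed.

End CombinedChannels.

Lemma ln2_pos : 0 < ln 2.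
Proof. pose proof ln_lt_2; lra. Qed.

Lemma log2_le x y : 0 < x -> x <= y -> log2 x <= log2 y.
Proof.
  intros Hx [Hxy | ->]; [|lra].
  pose proof ln2_pos; pose proof (ln_increasing _ _ Hx Hxy).
  unfold log2, Rdiv; apply Rmult_le_compat_r; [left; now apply Rinv_0_lt_compat | lra].
Qed.

Lemma log2_inj x y : 0 < x -> 0 < y -> log2 x = log2 y -> x = y.
Proof.
  intros Hx Hy E; apply ln_inv; try assumption.
  pose proof ln2_pos; unfold log2, Rdiv in E.
  apply Rmult_eq_reg_r in E; [assumption | apply Rinv_neq_0_compat; lra].
Qed.

Definition Jz (z : R) : R := log2 (2 / (1 + z)).

Lemma Jb_Jz {Y} (l : list Y) (V : bool -> Y -> R) : Jb l V = Jz (Zb l V).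
Proof. reflexivity. Qed.

Lemma Jz_0 : Jz 0 = 1.
Proof.
  unfold Jz, log2; replace (2 / (1 + 0)) with 2 by field.
  pose proof ln2_pos; field; lra.
Qed.

Lemma Jz_1 : Jz 1 = 0.
Proof. unfold Jz, log2; replace (2 / (1 + 1)) with 1 by field; rewrite ln_1; lra. Qed.

Lemma Jz_add x y : 0 <= x -> 0 <= y ->
  Jz x + Jz y = 2 - log2 ((1 + x) * (1 + y)).
Proof.
  intros Hx Hy; unfold Jz, log2, Rdiv.
  rewrite !ln_mult, !ln_Rinv by (try apply Rinv_0_lt_compat; lra).
  pose proof ln2_pos; field; lra.
Qed.

Lemma Jz_add_polarization a b A :
  0 <= a <= 1 -> 0 <= b <= 1 -> 0 <= A -> A <= a + b - a * b ->
  Jz A + Jz (a * b) >= Jz a + Jz b /\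
  (Jz A + Jz (a * b) = Jz a + Jz b ->
   (Jz a = 0 \/ Jz a = 1) \/ (Jz b = 0 \/ Jz b = 1)).
Proof.
  intros Ha Hb HA HAab.
  assert (Hab : 0 <= a * b) by (apply Rmult_le_pos; lra).
  assert (Hgap : 0 <= a * b * ((1 - a) * (1 - b))).
  { apply Rmult_le_pos; [| apply Rmult_le_pos]; lra. }
  assert (Hprod : (1 + A) * (1 + a * b) + a * b * ((1 - a) * (1 - b))
                  <= (1 + a) * (1 + b)).
  { assert ((1 + A) * (1 + a * b) <= (1 + (a + b - a * b)) * (1 + a * b))
      by (apply Rmult_le_compat_r; lra).
    replace ((1 + a) * (1 + b))
      with ((1 + (a + b - a * b)) * (1 + a * b) + a * b * ((1 - a) * (1 - b))) by ring.
    lra. }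
  assert (HpA : 0 < (1 + A) * (1 + a * b)) by (apply Rmult_lt_0_compat; lra).
  rewrite !Jz_add by lra.
  split.
  - apply Rle_ge.
    assert (Hle : (1 + A) * (1 + a * b) <= (1 + a) * (1 + b)) by lra.
    pose proof (log2_le _ _ HpA Hle); lra.
  - intro E.
    assert (Eprod : (1 + A) * (1 + a * b) = (1 + a) * (1 + b)).
    { apply log2_inj; [lra | apply Rmult_lt_0_compat; lra | lra]. }
    assert (Hzero : a * b * ((1 - a) * (1 - b)) = 0) by lra.
    apply Rmult_integral in Hzero as [H0 | H0];
      apply Rmult_integral in H0 as [H | H].
    + left; right; subst; apply Jz_0.
    + right; right; subst; apply Jz_0.
    + left; left; replace a with 1 by lra; apply Jz_1.
    + right; left; replace b with 1 by lra; apply Jz_1.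
Qed.

Theorem proposition1 (Y1 Y2 : Type) (l1 : list Y1) (l2 : list Y2)
  (W' : bool -> Y1 -> R) (W'' : bool -> Y2 -> R)
  (H1 : is_BDMC l1 W') (H2 : is_BDMC l2 W'') :
  Jb (minus_out l1 l2) (bminus W' W'') + Jb (plus_out l1 l2) (bplus W' W'')
    >= Jb l1 W' + Jb l2 W''
  /\
  (Jb (minus_out l1 l2) (bminus W' W'') + Jb (plus_out l1 l2) (bplus W' W'')
     = Jb l1 W' + Jb l2 W'' ->
   (Jb l1 W' = 0 \/ Jb l1 W' = 1) \/ (Jb l2 W'' = 0 \/ Jb l2 W'' = 1)).
Proof.
  pose proof H1 as (_ & _ & Hpos1 & _); pose proof H2 as (_ & _ & Hpos2 & _).
  rewrite !Jb_Jz, Zb_bplus by assumption.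
  apply Jz_add_polarization.
  - split; [apply Zb_nonneg | now apply Zb_le_1].
  - split; [apply Zb_nonneg | now apply Zb_le_1].
  - apply Zb_nonneg.
  - now apply Zb_bminus_le.
Qed.
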